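(* There exist a financial system $S$ in the base model (all contracts of the same priority) and distinct banks $u,v_1,v_2$, with a debt contract of positive weight from $u$ to $v_1$ and one from $u$ to $v_2$, such that the following holds. For $(s_1,s_2)\in\{C,D\}^2$ let $S_{s_1s_2}$ be the system obtained from $S$ by deleting the debt contract from $u$ to $v_i$ for exactly those $i$ with $s_i=C$. Then each $S_{s_1s_2}$ has exactly one solution, and the payoffs $(q_{v_1},q_{v_2})$ at that solution are $(3,3)$ for $CC$, $(8/3,8/3)$ for $DD$, $(3/2,4)$ for $CD$, and $(4,3/2)$ for $DC$. In particular, in the two-player game where bank $v_i$ chooses $s_i$ and receives its payoff in $S_{s_1s_2}$, $D$ is a strictly dominant strategy for each player, while both players receive strictly more under $CC$ than under $DD$.
   Context: A financial system with payment priorities consists of: a finite set $V$ of banks; external assets $e_v\ge 0$ for each $v\in V$; a number $P\ge 1$ of priority levels; and a finite set of contracts, each of which is either a debt contract from a debtor $u$ to a creditor $v\neq u$ with weight $c>0$, or a credit default swap (CDS) from a debtor $u$ to a creditor $v\neq u$ in reference to a bank $w\notin\{u,v\}$ (the reference entity) with weight $c>0$. Every contract has a priority in $\{1,\dots,P\}$ (1 is the highest priority). It is assumed that every bank that is the reference entity of some CDS is the debtor of at least one debt contract of positive weight. Given a recovery rate vector $r\in[0,1]^V$: the liability of a contract $k$ is $l_k(r)=c$ if $k$ is a debt of weight $c$, and $l_k(r)=c\,(1-r_w)$ if $k$ is a CDS of weight $c$ in reference to $w$. For a bank $v$, $l_v(r)$ is the sum of the liabilities of the contracts with debtor $v$;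 $l_v^{(\rho)}(r)$ is the sum of the liabilities of contracts with debtor $v$ and priority $\rho$; and $l_v^{(\le\rho)}(r)=\sum_{i=1}^{\rho}l_v^{(i)}(r)$ (with $l_v^{(\le 0)}=0$). The payment on a contract $k$ with debtor $v$ and priority $\rho$ is $p_k(r)=l_k(r)\cdot\min\{1,\max\{0,(r_v l_v(r)-l_v^{(\le\rho-1)}(r))/l_v^{(\rho)}(r)\}\}$ (and $p_k(r)=0$ if $l_v^{(\rho)}(r)=0$). The assets of $v$ are $a_v(r)=e_v+\sum_k p_k(r)$, summing over contracts $k$ with creditor $v$. A vector $r\in[0,1]^V$ is a solution (clearing vector) if for every $v\in V$: $r_v=1$ when $a_v(r)\ge l_v(r)$, and $r_v=a_v(r)/l_v(r)$ when $a_v(r)<l_v(r)$. The payoff of $v$ is $q_v(r)=\max\{a_v(r)-l_v(r),0\}$. When $P=1$, payments reduce to $p_k(r)=r_v\,l_k(r)$ (principle of proportionality); this is called the base model. *)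

From Stdlib Require Import Reals List Arith Bool.
Import ListNotations.
Open Scope R_scope.
Open Scope bool_scope.

(* Banks are the natural numbers 0 .. nbanks-1.
   A contract: debtor, creditor, kind (None = debt, Some w = CDS in reference
   to bank w), weight c, priority. *)
Record contract := mkContract {
  debtor : nat; creditor : nat; ref : option nat; weight : R; prio : nat }.

Record system := mkSystem {
  nbanks : nat; ext : nat -> R; nprio : nat; contracts : list contract }.

Definition is_debt (k : contract) : Prop := ref k = None.

Definition wf_contract (S : system) (k : contract) : Prop :=
  (debtor k < nbanks S)%nat /\ (creditor k < nbanks S)%nat /\
  debtor k <> creditor k /\ 0 < weight k /\
  (1 <= prio k <= nprio S)%nat /\
  match ref k with
  | None => True
  | Some w => (w < nbanks S)%nat /\ w <> debtor k /\ w <> creditor k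
  end.

Definition wf_system (S : system) : Prop :=
  (1 <= nprio S)%nat /\
  (forall v, (v < nbanks S)%nat -> 0 <= ext S v) /\
  (forall k, In k (contracts S) -> wf_contract S k) /\
  (forall k w, In k (contracts S) -> ref k = Some w ->
     exists k', In k' (contracts S) /\ ref k' = None /\ debtor k' = w /\ 0 < weight k').

Definition base_model (S : system) : Prop := nprio S = 1%nat.

Definition sumR (f : contract -> R) (l : list contract) : R :=
  fold_right (fun k acc => f k + acc) 0 l.

Definition liab (r : nat -> R) (k : contract) : R :=
  match ref k with
  | None => weight k
  | Some w => weight k * (1 - r w)
  end.

Definition liab_bank (S : system) (r : nat -> R) (v : nat) : R :=
  sumR (fun k => if Nat.eqb (debtor k) v then liab r k else 0) (contracts S).

Definition liab_prio (S : system) (r : nat -> R) (v rho : nat) : R :=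
  sumR (fun k => if Nat.eqb (debtor k) v && Nat.eqb (prio k) rho
                 then liab r k else 0) (contracts S).

Definition liab_le (S : system) (r : nat -> R) (v rho : nat) : R :=
  sumR (fun k => if Nat.eqb (debtor k) v && Nat.leb 1 (prio k) && Nat.leb (prio k) rho
                 then liab r k else 0) (contracts S).

Definition payment (S : system) (r : nat -> R) (k : contract) : R :=
  let v := debtor k in
  let rho := prio k in
  let L := liab_prio S r v rho in
  if Req_EM_T L 0 then 0
  else liab r k *
       Rmin 1 (Rmax 0 ((r v * liab_bank S r v - liab_le S r v (rho - 1)) / L)).

Definition assets (S : system) (r : nat -> R) (v : nat) : R :=
  ext S v + sumR (fun k => if Nat.eqb (creditor k) v then payment S r k else 0)
                 (contracts S).

Definition is_solution (S : system) (r : nat -> R) : Prop :=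
  forall v, (v < nbanks S)%nat ->
    0 <= r v <= 1 /\
    (assets S r v >= liab_bank S r v -> r v = 1) /\
    (assets S r v < liab_bank S r v -> r v = assets S r v / liab_bank S r v).

Definition payoff (S : system) (r : nat -> R) (v : nat) : R :=
  Rmax (assets S r v - liab_bank S r v) 0.

Definition unique_solution_payoffs (S : system) (v1 v2 : nat) (x1 x2 : R) : Prop :=
  exists r, is_solution S r /\
    (forall r', is_solution S r' -> forall v, (v < nbanks S)%nat -> r' v = r v) /\
    payoff S r v1 = x1 /\ payoff S r v2 = x2.

Definition with_contracts (S : system) (l : list contract) : system :=
  mkSystem (nbanks S) (ext S) (nprio S) l.

(* Bank 0 (= u) owes 25 to each of the banks 1 and 2 (= v1, v2) but has only
   5/2 of external assets, so its recovery rate is 1, 1/10 or 1/20 according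
   as 0, 1 or 2 of these debts remain.  Each v_i has external assets 3 and has
   written a CDS of weight 5/3 on u to bank 3, which costs it (5/3)(1 - r_u).
   Keeping its claim earns v_i the payment 25 r_u, but also lowers r_u and
   hence raises both players' CDS liabilities; the weights are tuned so that
   the payoff 3 + 25 r_u [v_i keeps] - (5/3)(1 - r_u) yields a prisoner's
   dilemma. *)
From Stdlib Require Import Reals List Arith Bool Lra Lia.
Import ListNotations.
Open Scope R_scope.

Lemma sumR_ext (f g : contract -> R) (l : list contract) :
  (forall k, In k l -> f k = g k) -> sumR f l = sumR g l.
Proof.
  induction l as [|a l IH]; intros H; simpl; [reflexivity|].
  rewrite (H a (or_introl eq_refl)), IH; [reflexivity|].
  intros k Hk; apply H; right; exact Hk.
Qed.

Lemma sumR_zero (l : list contract) : sumR (fun _ => 0) l = 0.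
Proof. induction l as [|a l IH]; simpl; [reflexivity | rewrite IH; ring]. Qed.

Lemma payment_single_priority (S : system) (r : nat -> R) (k : contract) :
  (forall k', In k' (contracts S) -> prio k' = 1%nat) -> prio k = 1%nat ->
  0 <= r (debtor k) <= 1 ->
  payment S r k = if Req_EM_T (liab_bank S r (debtor k)) 0 then 0
                  else liab r k * r (debtor k).
Proof.
  intros Hall Hk Hr.
  assert (Hprio : liab_prio S r (debtor k) (prio k) = liab_bank S r (debtor k)).
  { unfold liab_prio, liab_bank; rewrite Hk; apply sumR_ext.
    intros k' Hk'; rewrite (Hall k' Hk'); simpl; rewrite andb_true_r; reflexivity. }
  assert (Hhigher : liab_le S r (debtor k) (prio k - 1) = 0).
  { unfold liab_le; rewrite Hk; transitivity (sumR (fun _ => 0) (contracts S));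
      [apply sumR_ext | apply sumR_zero].
    intros k' _; simpl; destruct (debtor k' =? debtor k)%nat, (prio k') as [|[|p]];
      reflexivity. }
  unfold payment; rewrite Hprio, Hhigher.
  destruct (Req_EM_T (liab_bank S r (debtor k)) 0) as [H0|H0]; [reflexivity|].
  replace ((r (debtor k) * liab_bank S r (debtor k) - 0) / liab_bank S r (debtor k))
    with (r (debtor k)) by (field; exact H0).
  rewrite Rmax_right, Rmin_right by lra; reflexivity.
Qed.

Definition example_ext (v : nat) : R :=
  match v with 0%nat => 5/2 | 1%nat | 2%nat => 3 | _ => 0 end.

Definition debt_u_v1 := mkContract 0 1 None 25 1.
Definition debt_u_v2 := mkContract 0 2 None 25 1.
Definition cds_v1 := mkContract 1 3 (Some 0%nat) (5/3) 1.
Definition cds_v2 := mkContract 2 3 (Some 0%nat) (5/3) 1.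

(* [keep_i] says whether v_i keeps (plays D) or deletes (plays C) its claim. *)
Definition example (keep1 keep2 : bool) : system :=
  mkSystem 4 example_ext 1
    ((if keep1 then [debt_u_v1] else []) ++ (if keep2 then [debt_u_v2] else []) ++
     [cds_v1; cds_v2]).

Definition keeps (keep1 keep2 : bool) (v : nat) : bool :=
  match v with 1%nat => keep1 | 2%nat => keep2 | _ => false end.

Definition recovery_u (keep1 keep2 : bool) : R :=
  match keep1, keep2 with
  | false, false => 1
  | true, true => 1/20
  | _, _ => 1/10
  end.

Definition holder_payoff (keep : bool) (ru : R) : R :=
  3 + (if keep then 25 * ru else 0) - 5/3 * (1 - ru).

Ltac unfold_example :=
  cbn [example nbanks ext nprio contracts app liab_bank liab_prio liab_le assets
       sumR fold_right debtor creditor ref weight prio Nat.eqb liab andb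
       debt_u_v1 debt_u_v2 cds_v1 cds_v2 example_ext keeps recovery_u].

Section Example.

Variables (keep1 keep2 : bool).

Local Notation S := (example keep1 keep2).

Lemma example_single_priority (k : contract) : In k (contracts S) -> prio k = 1%nat.
Proof.
  intros Hk; destruct keep1, keep2; unfold_example; simpl in Hk;
    repeat (destruct Hk as [<-|Hk]; [reflexivity|]); contradiction.
Qed.

Lemma liab_bank_u (r : nat -> R) :
  liab_bank S r 0 = 25 * ((if keep1 then 1 else 0) + (if keep2 then 1 else 0)).
Proof. unfold liab_bank; destruct keep1, keep2; unfold_example; ring. Qed.

Lemma liab_bank_holder (r : nat -> R) (v : nat) : (v = 1 \/ v = 2)%nat ->
  liab_bank S r v = 5/3 * (1 - r 0%nat).
Proof.
  intros [-> | ->]; unfold liab_bank; destruct keep1, keep2; unfold_example; ring.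
Qed.

Lemma liab_bank_protection_buyer (r : nat -> R) : liab_bank S r 3 = 0.
Proof. unfold liab_bank; destruct keep1, keep2; unfold_example; ring. Qed.

Lemma assets_u (r : nat -> R) : assets S r 0 = 5/2.
Proof. unfold assets; destruct keep1, keep2; unfold_example; ring. Qed.

Lemma assets_holder (r : nat -> R) (v : nat) : (v = 1 \/ v = 2)%nat ->
  0 <= r 0%nat <= 1 ->
  assets S r v = 3 + (if keeps keep1 keep2 v then 25 * r 0%nat else 0).
Proof.
  intros Hv Hr.
  assert (Hpay : forall k, debtor k = 0%nat -> prio k = 1%nat ->
            payment S r k = if Req_EM_T (liab_bank S r 0) 0 then 0
                            else liab r k * r 0%nat).
  { intros k Hdeb Hk; rewrite <- Hdeb in Hr |- *.
    exact (payment_single_priority _ _ k example_single_priority Hk Hr). }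
  rewrite liab_bank_u in Hpay.
  destruct Hv as [-> | ->]; unfold assets; destruct keep1, keep2; unfold_example;
    rewrite ?Hpay by reflexivity; unfold_example;
    try (destruct (Req_EM_T _ 0); [lra|]); unfold_example; ring.
Qed.

Lemma assets_protection_buyer_nonneg (r : nat -> R) :
  (forall v, (v <= 2)%nat -> 0 <= r v <= 1) -> 0 <= assets S r 3.
Proof.
  intros Hr.
  assert (Hcds : forall k, In k (contracts S) -> ref k = Some 0%nat ->
            (debtor k <= 2)%nat -> 0 <= weight k -> 0 <= payment S r k).
  { intros k Hk Href Hdeb Hw.
    pose proof (Hr _ Hdeb) as Hrk; pose proof (Hr 0%nat ltac:(lia)) as Hr0.
    rewrite (payment_single_priority _ _ k example_single_priority
      (example_single_priority k Hk) Hrk).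
    destruct (Req_EM_T _ 0); [lra|].
    unfold liab; rewrite Href; apply Rmult_le_pos; [apply Rmult_le_pos|]; lra. }
  assert (In cds_v1 (contracts S) /\ In cds_v2 (contracts S)) as [In1 In2]
    by (destruct keep1, keep2; simpl; tauto).
  pose proof (Hcds _ In1 eq_refl ltac:(cbn; lia) ltac:(cbn; lra)).
  pose proof (Hcds _ In2 eq_refl ltac:(cbn; lia) ltac:(cbn; lra)).
  unfold assets; destruct keep1, keep2; unfold_example; lra.
Qed.

Lemma recovery_u_bounds : 0 <= recovery_u keep1 keep2 <= 1.
Proof. destruct keep1, keep2; unfold_example; lra. Qed.

Lemma example_solution_values (r : nat -> R) : is_solution S r ->
  r 0%nat = recovery_u keep1 keep2 /\ forall v, (1 <= v <= 3)%nat -> r v = 1.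
Proof.
  intros Hsol.
  destruct (Hsol 0%nat ltac:(cbn; lia)) as [B0 [Hsolvent0 Hdefault0]].
  rewrite assets_u, liab_bank_u in Hsolvent0, Hdefault0.
  assert (Hu : r 0%nat = recovery_u keep1 keep2).
  { destruct keep1, keep2; unfold_example;
      [rewrite Hdefault0 by lra; field ..| apply Hsolvent0; lra]. }
  split; [exact Hu|].
  intros v Hv; destruct (Hsol v ltac:(cbn; lia)) as [Bv [Hsolvent _]]; apply Hsolvent.
  destruct (Nat.eq_dec v 3) as [-> | Hv3].
  - rewrite liab_bank_protection_buyer; apply Rle_ge, assets_protection_buyer_nonneg.
    intros w Hw; apply Hsol; cbn; lia.
  - rewrite assets_holder, liab_bank_holder by (lia || exact B0).
    destruct (keeps keep1 keep2 v); lra.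
Qed.

Definition example_clearing (v : nat) : R :=
  if Nat.eqb v 0 then recovery_u keep1 keep2 else 1.

Lemma example_clearing_solution : is_solution S example_clearing.
Proof.
  pose proof recovery_u_bounds as Bu.
  assert (B0 : 0 <= example_clearing 0%nat <= 1) by exact Bu.
  intros v Hv; cbn in Hv.
  destruct v as [|[|[|[|v]]]]; [| | | |lia].
  - split; [exact Bu|]; rewrite assets_u, liab_bank_u; unfold example_clearing.
    destruct keep1, keep2; unfold_example; split; intros; try lra; field.
  - split; [unfold example_clearing; simpl; lra|].
    rewrite assets_holder, liab_bank_holder by (tauto || exact B0).
    unfold example_clearing; simpl.
    split; intros; [reflexivity | destruct keep1; lra].
  - split; [unfold example_clearing; simpl; lra|].
    rewrite assets_holder, liab_bank_holder by (tauto || exact B0).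
    unfold example_clearing; simpl.
    split; intros; [reflexivity | destruct keep2; lra].
  - assert (0 <= assets S example_clearing 3).
    { apply assets_protection_buyer_nonneg; intros w _; unfold example_clearing.
      destruct (w =? 0)%nat; lra. }
    split; [unfold example_clearing; simpl; lra|].
    rewrite liab_bank_protection_buyer; split; intros; [reflexivity | lra].
Qed.

Lemma example_unique_solution_payoffs (x1 x2 : R) :
  x1 = holder_payoff keep1 (recovery_u keep1 keep2) ->
  x2 = holder_payoff keep2 (recovery_u keep1 keep2) ->
  unique_solution_payoffs S 1 2 x1 x2.
Proof.
  intros -> ->; pose proof recovery_u_bounds as Bu.
  exists example_clearing; split; [exact example_clearing_solution|]; split.
  - intros r' Hr' v Hv; destruct (example_solution_values r' Hr') as [Hu Hrest].
    unfold example_clearing; cbn in Hv.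
    destruct (Nat.eqb_spec v 0) as [-> | Hv0]; [exact Hu | apply Hrest; lia].
  - unfold payoff, holder_payoff.
    rewrite !assets_holder, !liab_bank_holder by (tauto || exact Bu).
    unfold example_clearing; simpl.
    split; (rewrite Rmax_left; [ring|]); [destruct keep1 | destruct keep2]; lra.
Qed.

End Example.

Lemma example_wf : wf_system (example true true).
Proof.
  unfold wf_system; cbn [example nprio nbanks ext contracts app].
  split; [lia|]; split.
  { intros v _; destruct v as [|[|[|v]]]; cbn [example_ext]; lra. }
  split.
  - intros k Hk; repeat (destruct Hk as [<-|Hk];
      [unfold wf_contract; unfold_example; repeat split; lia || lra |]); contradiction.
  - intros k w Hk Hw.
    assert (w = 0%nat) as ->
      by (repeat (destruct Hk as [<-|Hk]; [cbn in Hw; congruence|]); contradiction).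
    exists debt_u_v1; unfold_example; split; [left; reflexivity | repeat split; lra].
Qed.

Theorem mainTheorem10 :
  exists (S : system) (u v1 v2 : nat) (d1 d2 : contract) (rest : list contract),
    wf_system S /\ base_model S /\
    (u < nbanks S)%nat /\ (v1 < nbanks S)%nat /\ (v2 < nbanks S)%nat /\
    u <> v1 /\ u <> v2 /\ v1 <> v2 /\
    contracts S = d1 :: d2 :: rest /\
    ref d1 = None /\ debtor d1 = u /\ creditor d1 = v1 /\ 0 < weight d1 /\
    ref d2 = None /\ debtor d2 = u /\ creditor d2 = v2 /\ 0 < weight d2 /\
    (forall k, In k rest -> ref k = None -> debtor k = u ->
        creditor k <> v1 /\ creditor k <> v2) /\
    unique_solution_payoffs (with_contracts S rest) v1 v2 3 3 /\
    unique_solution_payoffs (with_contracts S (d1 :: d2 :: rest)) v1 v2 (8/3) (8/3) /\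
    unique_solution_payoffs (with_contracts S (d2 :: rest)) v1 v2 (3/2) 4 /\
    unique_solution_payoffs (with_contracts S (d1 :: rest)) v1 v2 4 (3/2).
Proof.
  exists (example true true), 0%nat, 1%nat, 2%nat, debt_u_v1, debt_u_v2, [cds_v1; cds_v2].
  split; [exact example_wf|].
  split; [reflexivity|].
  do 7 (split; [cbn; lia || reflexivity|]).
  do 8 (split; [unfold_example; reflexivity || lra|]).
  split.
  { intros k Hk Href; repeat (destruct Hk as [<-|Hk]; [discriminate|]); contradiction. }
  split; [apply (example_unique_solution_payoffs false false) |
   split; [apply (example_unique_solution_payoffs true true) |
   split; [apply (example_unique_solution_payoffs false true) |
           apply (example_unique_solution_payoffs true false)]]];
    unfold holder_payoff; unfold_example; field.
Qed.
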